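(* Let $s_{1}, s_{2}, p_{1}, p_{2}, m, k \in \mathbb N$ with $m \geq s_{1}+s_{2}-1$. Then \begin{align*} \sum_{n=1}^\infty\frac{H_n^{(p_{1},s_{1})}H_n^{(p_{2},s_{2})}}{n^{m}\binom{n+k}{k}} &=\sum_{\ell_{1}=0}^{s_{1}-1}\sum_{t_{1}=0}^{s_{1}-1-\ell_{1}} \sum_{\ell_{2}=0}^{s_{2}-1}\sum_{t_{2}=0}^{s_{2}-1-\ell_{2}}a(s_{1},\ell_{1},t_{1})a(s_{2},\ell_{2},t_{2})\\ &\quad \times \sum_{r=1}^{k}(-1)^{r+1} r \binom{k}{r}\, T(p_{1}-\ell_{1},p_{2}-\ell_{2},m-t_{1}-t_{2},1,r,0)\,, \end{align*} where $T(q_1,q_2,u,1,r,0)=\sum_{n=1}^\infty\frac{H_n^{(q_{1})}H_n^{(q_{2})}}{n^{u}(n+r)}$. Consequently this sum can be expressed in terms of classical Euler sums, zeta values and generalized harmonic numbers.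
   Context: $\mathbb N=\{1,2,\dots\}$. For $n\in\mathbb N_0$ and $q\in\mathbb N$, $H_n^{(q)}=\sum_{j=1}^n j^{-q}$; for an integer $q\ge 0$, $H_n^{(-q)}$ denotes $\sum_{\ell=1}^n \ell^{q}$ (so $H_n^{(0)}=n$). Generalized hyperharmonic numbers: $H_n^{(p,1)}=H_n^{(p)}$, $H_n^{(p,r)}=\sum_{j=1}^n H_j^{(p,r-1)}$ for $r\ge2$. For $q_1,q_2\in\mathbb Z$, $u,r\in\mathbb N$, $T(q_{1},q_{2},u,1,r,0):=\sum_{n=1}^\infty\frac{H_n^{(q_{1})}H_n^{(q_{2})}}{n^{u}(n+r)}$. Bernoulli numbers $B_j^{+}$: $\frac{x}{1-e^{-x}}=\sum_{j\ge0}B_j^{+}\frac{x^j}{j!}$. The rational coefficients $a(r,m,j)$ ($r\in\mathbb N$, $0\le m\le r-1$, $0\le j\le r-1-m$) are defined by $a(1,0,0)=1$ and, for $r\ge1$: $a(r+1,r,0)=-\sum_{m=0}^{r-1} \frac{a(r,m,r-m-1)}{r-m}$; $a(r+1,m,\ell)=\sum_{j=\ell-1}^{r-1-m} \frac{a(r,m,j)}{j+1} \binom{j+1}{j-\ell+1}B_{j-\ell+1}^{+}$ for $0\leq m \leq r-1$, $1\leq \ell \leq r-m$; $a(r+1,m,0)=-\sum_{y=0}^{m} \sum_{j=\max\{0, m-y-1\}}^{r-1-y}a(r,y,j)D(r,m,j,y)$ for $0\leq m \leq r-1$, where $D(r,m,j,y)=\sum_{\ell=\max\{0, m-y-1\}}^{j}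 \frac{1}{j+1} \binom{j+1}{j-\ell}B_{j-\ell}^{+}\binom{\ell+1}{m-y}(-1)^{1+\ell-m+y}$. (These satisfy the known identity $H_n^{(p,r)}=\sum_{m=0}^{r-1}\sum_{j=0}^{r-1-m}a(r,m,j)n^jH_n^{(p-m)}$ for all $n,p\in\mathbb N$.) *)

From Stdlib Require Import Reals Arith ZArith List Lia Lra.
From Coquelicot Require Import Coquelicot.
Open Scope R_scope.

(* fsum a b f = f a + f (a+1) + ... + f b  (0 if b < a) *)
Definition fsum (a b : nat) (f : nat -> R) : R :=
  fold_right (fun i acc => f i + acc) 0 (List.seq a (S b - a)%nat).

Fixpoint binom (n k : nat) : nat :=
  match n, k with
  | _, O => 1%nat
  | O, S _ => 0%nat
  | S n', S k' => (binom n' k' + binom n' (S k'))%nat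
  end.

(* Bernoulli numbers B_j^+ : x/(1-e^{-x}) = sum_j B_j^+ x^j/j!.
   Comparing coefficients of x^{n+1}/(n+1)! in x = (1-e^{-x}) * sum_j B_j^+ x^j/j!
   gives  sum_{i=1}^{n+1} (-1)^{i+1} C(n+1,i) B^+_{n+1-i} = [n = 0],
   i.e.  B^+_n = ([n=0] - sum_{i=2}^{n+1} (-1)^{i+1} C(n+1,i) B^+_{n+1-i}) / (n+1).
   bern_tab n j = B^+_j for j <= n. *)
Fixpoint bern_tab (n : nat) : nat -> R :=
  match n with
  | O => fun j => if (j =? 0)%nat then 1 else 0
  | S n' => fun j =>
      if (j <=? n')%nat then bern_tab n' j
      else if (j =? S n')%nat then
        (- fsum 2 (S (S n'))
             (fun i => (-1) ^ (S i) * INR (binom (S (S n')) i)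
                       * bern_tab n' (S (S n') - i)%nat))
        / INR (S (S n'))
      else 0
  end.

Definition Bplus (j : nat) : R := bern_tab j j.

Definition Hq (n : nat) (q : Z) : R :=
  fsum 1 n (fun j => powerRZ (INR j) (- q)).

(* generalized hyperharmonic numbers H_n^{(p,r)}, r >= 1 (value 0 for r = 0, unused) *)
Fixpoint hyperH (p : Z) (r : nat) (n : nat) : R :=
  match r with
  | O => 0
  | S r' =>
      match r' with
      | O => Hq n p
      | S _ => fsum 1 n (fun j => hyperH p r' j)
      end
  end.

(* one recursion step: given A = a(r,.,.) (r >= 1), compute a(r+1,.,.) *)
Definition D_coef (r m j y : nat) : R :=
  fsum (m - y - 1)%nat j (fun l =>
    / INR (S j) * INR (binom (S j) (j - l)%nat) * Bplus (j - l)%nat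
    * INR (binom (S l) (m - y)%nat) * (-1) ^ (S l + y - m)%nat).

Definition a_step (r : nat) (A : nat -> nat -> R) (m l : nat) : R :=
  if andb (m =? r)%nat (l =? 0)%nat then
    - fsum 0 (r - 1)%nat (fun m' => A m' (r - m' - 1)%nat / INR (r - m')%nat)
  else if (m <=? (r - 1)%nat)%nat then
    if (l =? 0)%nat then
      - fsum 0 m (fun y =>
          fsum (m - y - 1)%nat (r - 1 - y)%nat (fun j => A y j * D_coef r m j y))
    else if (l <=? (r - m)%nat)%nat then
      fsum (l - 1)%nat (r - 1 - m)%nat (fun j =>
        A m j / INR (S j) * INR (binom (S j) (S j - l)%nat) * Bplus (S j - l)%nat)
    else 0
  else 0.

(* a_coef r m j = a(r,m,j) for r >= 1, 0 <= m <= r-1, 0 <= j <= r-1-m; 0 otherwise *)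
Fixpoint a_coef (r : nat) : nat -> nat -> R :=
  match r with
  | O => fun _ _ => 0
  | S r' =>
      match r' with
      | O => fun m j => if andb (m =? 0)%nat (j =? 0)%nat then 1 else 0
      | S _ => a_step r' (a_coef r')
      end
  end.

Definition T_term (q1 q2 : Z) (u r : nat) (n : nat) : R :=
  Hq n q1 * Hq n q2 / (INR n ^ u * INR (n + r)).

Definition T (q1 q2 : Z) (u r : nat) : R :=
  Series (fun n => T_term q1 q2 u r (S n)).

(* Each hyperharmonic number is a finite combination of the terms [n ^ j * H_n^(p - m)] with
   coefficients [a(s, m, j)]: by induction on [s], summing [k ^ j * H_k^(q)] by parts against
   Faulhaber's polynomial, whose coefficients are Bernoulli numbers.  Partial fractions give
   [1 / binom(n + k, k) = sum_(r=1..k) (-1)^(r+1) r binom(k, r) / (n + r)], so the n-th summand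
   is a finite combination of n-th terms of the series [T].  These converge because
   [H_n^(p - l) <= n ^ l H_n] and [H_n ^ 2 / (n (n + 1))] is dominated by the decrease of
   [(H_n ^ 2 + 2 H_n + 3) / n]; linearity of convergent series concludes. *)

From Stdlib Require Import Reals Arith ZArith List Lia Lra.
From Coquelicot Require Import Coquelicot.
Open Scope R_scope.

Definition sum_seq (a n : nat) (f : nat -> R) : R :=
  fold_right (fun i acc => f i + acc) 0 (List.seq a n).

Lemma fsum_sum_seq a b f : fsum a b f = sum_seq a (S b - a) f.
Proof. reflexivity. Qed.

Lemma sum_seq_S a n f : sum_seq a (S n) f = sum_seq a n f + f (a + n)%nat.
Proof.
  revert a; induction n as [|n IHn]; intros a.
  - unfold sum_seq; simpl. rewrite Nat.add_0_r. ring.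
  - change (sum_seq a (S (S n)) f) with (f a + sum_seq (S a) (S n) f).
    change (sum_seq a (S n) f) with (f a + sum_seq (S a) n f).
    rewrite IHn, Nat.add_succ_comm. ring.
Qed.

Lemma sum_seq_add a n1 n2 f :
  sum_seq a (n1 + n2) f = sum_seq a n1 f + sum_seq (a + n1) n2 f.
Proof.
  induction n2 as [|n2 IHn2].
  - rewrite Nat.add_0_r. unfold sum_seq at 3. simpl. ring.
  - rewrite Nat.add_succ_r, !sum_seq_S, IHn2, Nat.add_assoc. ring.
Qed.

Lemma sum_seq_ext a n f g :
  (forall i, (a <= i < a + n)%nat -> f i = g i) -> sum_seq a n f = sum_seq a n g.
Proof.
  induction n as [|n IHn]; intros Hfg; [reflexivity|].
  rewrite !sum_seq_S, IHn, Hfg; [reflexivity | lia | intros; apply Hfg; lia].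
Qed.

Lemma sum_seq_le a n f g :
  (forall i, (a <= i < a + n)%nat -> f i <= g i) -> sum_seq a n f <= sum_seq a n g.
Proof.
  induction n as [|n IHn]; intros Hfg; [unfold sum_seq; simpl; lra|].
  rewrite !sum_seq_S. apply Rplus_le_compat.
  - apply IHn. intros; apply Hfg; lia.
  - apply Hfg; lia.
Qed.

Lemma sum_seq_plus a n f g :
  sum_seq a n (fun i => f i + g i) = sum_seq a n f + sum_seq a n g.
Proof.
  induction n as [|n IHn]; [unfold sum_seq; simpl; ring|].
  rewrite !sum_seq_S, IHn. ring.
Qed.

Lemma sum_seq_scal a n c f : sum_seq a n (fun i => c * f i) = c * sum_seq a n f.
Proof.
  induction n as [|n IHn]; [unfold sum_seq; simpl; ring|].
  rewrite !sum_seq_S, IHn. ring.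
Qed.

Lemma sum_seq_zero a n f :
  (forall i, (a <= i < a + n)%nat -> f i = 0) -> sum_seq a n f = 0.
Proof.
  intros Hf. rewrite (sum_seq_ext a n f (fun i => 0 * 0)).
  - rewrite sum_seq_scal. ring.
  - intros i Hi. rewrite Hf by exact Hi. ring.
Qed.

Lemma sum_seq_swap a n c m (F : nat -> nat -> R) :
  sum_seq a n (fun i => sum_seq c m (F i)) = sum_seq c m (fun j => sum_seq a n (fun i => F i j)).
Proof.
  induction n as [|n IHn].
  - symmetry. apply sum_seq_zero. reflexivity.
  - rewrite sum_seq_S, IHn, <- sum_seq_plus. apply sum_seq_ext.
    intros j _. rewrite sum_seq_S. reflexivity.
Qed.

Lemma fsum_nil a b f : (b < a)%nat -> fsum a b f = 0.
Proof. intros Hba. rewrite fsum_sum_seq. replace (S b - a)%nat with 0%nat by lia. reflexivity. Qed.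

Lemma fsum_first a b f : (a <= b)%nat -> fsum a b f = f a + fsum (S a) b f.
Proof.
  intros Hab. rewrite !fsum_sum_seq. replace (S b - a)%nat with (S (S b - S a)) by lia.
  reflexivity.
Qed.

Lemma fsum_last a b f : (a <= S b)%nat -> fsum a (S b) f = fsum a b f + f (S b).
Proof.
  intros Hab. rewrite !fsum_sum_seq. replace (S (S b) - a)%nat with (S (S b - a)) by lia.
  rewrite sum_seq_S. do 2 f_equal. lia.
Qed.

Lemma fsum_one a f : fsum a a f = f a.
Proof. rewrite fsum_first, fsum_nil by lia. ring. Qed.

Lemma fsum_ext a b f g :
  (forall i, (a <= i <= b)%nat -> f i = g i) -> fsum a b f = fsum a b g.
Proof. intros Hfg. apply sum_seq_ext. intros; apply Hfg; lia. Qed.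

Lemma fsum_le a b f g :
  (forall i, (a <= i <= b)%nat -> f i <= g i) -> fsum a b f <= fsum a b g.
Proof. intros Hfg. apply sum_seq_le. intros; apply Hfg; lia. Qed.

Lemma fsum_zero a b f : (forall i, (a <= i <= b)%nat -> f i = 0) -> fsum a b f = 0.
Proof. intros Hf. apply sum_seq_zero. intros; apply Hf; lia. Qed.

Lemma fsum_plus a b f g : fsum a b (fun i => f i + g i) = fsum a b f + fsum a b g.
Proof. apply sum_seq_plus. Qed.

Lemma fsum_scal_l a b c f : fsum a b (fun i => c * f i) = c * fsum a b f.
Proof. apply sum_seq_scal. Qed.

Lemma fsum_scal_r a b c f : fsum a b (fun i => f i * c) = fsum a b f * c.
Proof. rewrite Rmult_comm, <- fsum_scal_l. apply fsum_ext; intros; ring. Qed.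

Lemma fsum_opp a b f : fsum a b (fun i => - f i) = - fsum a b f.
Proof.
  replace (- fsum a b f) with (-1 * fsum a b f) by ring.
  rewrite <- fsum_scal_l. apply fsum_ext; intros; ring.
Qed.

Lemma fsum_minus a b f g : fsum a b (fun i => f i - g i) = fsum a b f - fsum a b g.
Proof. unfold Rminus. rewrite fsum_plus, fsum_opp. reflexivity. Qed.

Lemma fsum_swap a b c d (F : nat -> nat -> R) :
  fsum a b (fun i => fsum c d (F i)) = fsum c d (fun j => fsum a b (fun i => F i j)).
Proof. apply sum_seq_swap. Qed.

Lemma fsum_shift a b c f : fsum a b (fun i => f (i + c)%nat) = fsum (a + c) (b + c) f.
Proof.
  rewrite !fsum_sum_seq. replace (S (b + c) - (a + c))%nat with (S b - a)%nat by lia.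
  induction (S b - a)%nat as [|n IHn]; [reflexivity|].
  rewrite !sum_seq_S, IHn. do 2 f_equal. lia.
Qed.

Lemma fsum_extend a b a' b' f :
  (a' <= a)%nat -> (b <= b')%nat -> (a <= S b)%nat ->
  (forall i, (a' <= i <= b')%nat -> (i < a \/ b < i)%nat -> f i = 0) ->
  fsum a' b' f = fsum a b f.
Proof.
  intros Ha Hb Hab Hf. rewrite !fsum_sum_seq.
  replace (S b' - a')%nat with ((a - a') + ((S b - a) + (S b' - S b)))%nat by lia.
  rewrite !sum_seq_add, (sum_seq_zero a'), (sum_seq_zero (a' + (a - a') + (S b - a))).
  - replace (a' + (a - a'))%nat with a by lia. ring.
  - intros i Hi. apply Hf; lia.
  - intros i Hi. apply Hf; lia.
Qed.

Lemma fsum_single a b i0 f : (a <= i0 <= b)%nat ->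
  (forall i, (a <= i <= b)%nat -> i <> i0 -> f i = 0) -> fsum a b f = f i0.
Proof.
  intros Hi0 Hf. rewrite (fsum_extend i0 i0), fsum_one by (lia || intros; apply Hf; lia).
  reflexivity.
Qed.

Lemma fsum_reflect K b F : (K <= b)%nat ->
  fsum 0 K (fun i => F (b - i)%nat) = fsum (b - K) b F.
Proof.
  induction K as [|K IHK]; intros HKb.
  - rewrite fsum_one, Nat.sub_0_r, fsum_one. reflexivity.
  - rewrite fsum_last, IHK, (fsum_first (b - S K)) by lia.
    replace (S (b - S K)) with (b - K)%nat by lia. ring.
Qed.

Lemma fsum_triangle N (F : nat -> nat -> R) :
  fsum 0 N (fun j => fsum 0 j (F j)) = fsum 0 N (fun l => fsum l N (fun j => F j l)).
Proof.
  induction N as [|N IHN].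
  - rewrite !fsum_one. reflexivity.
  - rewrite (fsum_last 0 N (fun j => _)), (fsum_last 0 N (F (S N))) by lia.
    rewrite (fsum_last 0 N (fun l => fsum l (S N) _)), fsum_one, IHN by lia.
    rewrite <- Rplus_assoc, <- fsum_plus. f_equal.
    apply fsum_ext. intros l Hl. rewrite fsum_last by lia. reflexivity.
Qed.

Lemma C_n_0 n : Binomial.C n 0 = 1.
Proof.
  unfold Binomial.C. rewrite Nat.sub_0_r. change (INR (fact 0)) with 1.
  field. apply INR_fact_neq_0.
Qed.

Lemma C_n_n n : Binomial.C n n = 1.
Proof.
  unfold Binomial.C. rewrite Nat.sub_diag. change (INR (fact 0)) with 1.
  field. apply INR_fact_neq_0.
Qed.

Lemma binom_0 n : binom n 0 = 1%nat.
Proof. destruct n; reflexivity. Qed.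

Lemma binom_gt n k : (n < k)%nat -> binom n k = 0%nat.
Proof.
  revert k; induction n as [|n IHn]; intros [|k] Hnk; try lia; [reflexivity|].
  simpl. rewrite !IHn by lia. reflexivity.
Qed.

Lemma INR_binom n k : (k <= n)%nat -> INR (binom n k) = Binomial.C n k.
Proof.
  revert k; induction n as [|n IHn]; intros [|k] Hkn; try lia.
  - rewrite C_n_0. reflexivity.
  - rewrite binom_0, C_n_0. reflexivity.
  - simpl binom. rewrite plus_INR, IHn by lia.
    destruct (Nat.eq_dec k n) as [->|Hkn'].
    + rewrite binom_gt, !C_n_n by lia. simpl. ring.
    + rewrite IHn by lia. apply pascal. lia.
Qed.

Lemma binom_diag n : binom n n = 1%nat.
Proof. apply INR_eq. rewrite INR_binom, C_n_n by lia. reflexivity. Qed.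

Lemma binom_1 n : binom n 1 = n.
Proof. induction n as [|n IHn]; [reflexivity|]. simpl. rewrite binom_0, IHn. reflexivity. Qed.

Lemma binom_sym n k : (k <= n)%nat -> binom n (n - k) = binom n k.
Proof. intros Hkn. apply INR_eq. rewrite !INR_binom by lia. symmetry. apply pascal_step1. lia. Qed.

Lemma binom_pos n k : (k <= n)%nat -> 0 < INR (binom n k).
Proof.
  intros Hkn. rewrite INR_binom by lia. unfold Binomial.C.
  apply Rdiv_lt_0_compat; [|apply Rmult_lt_0_compat]; apply INR_fact_lt_0.
Qed.

Lemma binom_trinomial n i d : (i + d <= n)%nat ->
  INR (binom n i) * INR (binom (n - i) d) = INR (binom n d) * INR (binom (n - d) i).
Proof.
  intros Hn. rewrite !INR_binom by lia. unfold Binomial.C.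
  replace (n - i - d)%nat with (n - d - i)%nat by lia.
  field. repeat split; apply INR_fact_neq_0.
Qed.

Lemma fsum_sum_f_R0 n f : fsum 0 n f = sum_f_R0 f n.
Proof.
  induction n as [|n IHn]; [rewrite fsum_one; reflexivity|].
  rewrite fsum_last, IHn by lia. reflexivity.
Qed.

Lemma alt_binom_sum k : (1 <= k)%nat -> fsum 0 k (fun r => (-1) ^ r * INR (binom k r)) = 0.
Proof.
  intros Hk. transitivity ((-1 + 1) ^ k); [|replace (-1 + 1) with 0 by ring; apply pow_i; lia].
  rewrite binomial, <- fsum_sum_f_R0. apply fsum_ext. intros r Hr.
  rewrite INR_binom, pow1 by lia. ring.
Qed.

Definition sub_one_coef (l d : nat) : R := INR (binom (S l) d) * (-1) ^ (S l - d).

Lemma pow_sub_one_expand x l : (x - 1) ^ S l = fsum 0 (S l) (fun d => sub_one_coef l d * x ^ d).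
Proof.
  replace (x - 1) with (x + -1) by ring.
  rewrite binomial, <- fsum_sum_f_R0. apply fsum_ext. intros d Hd.
  unfold sub_one_coef. rewrite INR_binom by lia. ring.
Qed.

Lemma pow_sub_pow_sub_one x l :
  x ^ S l - (x - 1) ^ S l = - fsum 0 l (fun d => sub_one_coef l d * x ^ d).
Proof.
  rewrite pow_sub_one_expand, fsum_last by lia.
  unfold sub_one_coef at 2. rewrite binom_diag, Nat.sub_diag. simpl (INR 1). ring.
Qed.

(** * Bernoulli numbers and Faulhaber's formula *)

Lemma bern_tab_stable n j : (j <= n)%nat -> bern_tab n j = Bplus j.
Proof.
  induction n as [|n IHn]; intros Hjn.
  - replace j with 0%nat by lia. reflexivity.
  - destruct (Nat.eq_dec j (S n)) as [->|Hj]; [reflexivity|].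
    cbn [bern_tab]. rewrite (proj2 (Nat.leb_le j n)) by lia. apply IHn. lia.
Qed.

Lemma Bplus_S n : INR (S (S n)) * Bplus (S n) =
  - fsum 2 (S (S n)) (fun i => (-1) ^ (S i) * INR (binom (S (S n)) i) * Bplus (S (S n) - i)).
Proof.
  unfold Bplus at 1. cbn [bern_tab].
  rewrite (proj2 (Nat.leb_gt (S n) n)), Nat.eqb_refl by lia.
  field_simplify; [|apply not_0_INR; lia].
  f_equal. apply fsum_ext. intros i Hi. rewrite bern_tab_stable by lia. reflexivity.
Qed.

Lemma bernoulli_recurrence N :
  fsum 0 N (fun i => INR (binom (S N) i) * (-1) ^ (N - i) * Bplus i) = if (N =? 0)%nat then 1 else 0.
Proof.
  destruct N as [|n]; [rewrite fsum_one; unfold Bplus; simpl; ring|].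
  set (g i := (-1) ^ (S i) * INR (binom (S (S n)) i) * Bplus (S (S n) - i)).
  assert (Hg : fsum 1 (S (S n)) g = 0).
  { rewrite fsum_first by lia. unfold g at 1.
    rewrite binom_1. replace (S (S n) - 1)%nat with (S n) by lia.
    pose proof (Bplus_S n) as HB. fold g in HB. simpl pow. lra. }
  simpl Nat.eqb. rewrite <- Hg.
  replace 1%nat with (S (S n) - S n)%nat at 1 by lia.
  rewrite <- fsum_reflect by lia. apply fsum_ext. intros i Hi. unfold g.
  replace (S (S n) - (S (S n) - i))%nat with i by lia.
  rewrite binom_sym by lia.
  replace (S (S (S n) - i)) with ((S n - i) + 2)%nat by lia. rewrite pow_add. simpl. ring.
Qed.

(* [faulhaber j n = sum_(k=1..n) k ^ j], by [faulhaber_sub_one] *)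
Definition faulhaber_coef (j l : nat) : R := / INR (S j) * INR (binom (S j) (j - l)) * Bplus (j - l).

Definition faulhaber (j : nat) (x : R) : R := fsum 0 j (fun l => faulhaber_coef j l * x ^ S l).

Lemma faulhaber_coef_sum j d : (d <= j)%nat ->
  fsum d j (fun l => faulhaber_coef j l * sub_one_coef l d) = if (d =? j)%nat then -1 else 0.
Proof.
  intros Hdj. assert (HSj : INR (S j) <> 0) by (apply not_0_INR; lia).
  replace d with (j - (j - d))%nat at 1 by lia. rewrite <- fsum_reflect by lia.
  transitivity (- (INR (binom (S j) d) / INR (S j)) *
     fsum 0 (j - d) (fun i => INR (binom (S (j - d)) i) * (-1) ^ (j - d - i) * Bplus i)).
  - rewrite <- fsum_scal_l. apply fsum_ext. intros i Hi.
    unfold faulhaber_coef, sub_one_coef.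
    replace (j - (j - i))%nat with i by lia.
    replace (S (j - i)) with (S j - i)%nat by lia.
    replace (S j - i - d)%nat with (S (j - d - i)) by lia.
    replace (S (j - d)) with (S j - d)%nat by lia.
    transitivity (INR (binom (S j) i) * INR (binom (S j - i) d)
                  * (- (-1) ^ (j - d - i) * Bplus i / INR (S j))).
    { cbn [pow]. field. exact HSj. }
    rewrite binom_trinomial by lia. field. exact HSj.
  - rewrite bernoulli_recurrence.
    destruct (Nat.eq_dec d j) as [->|Hdj'].
    + rewrite Nat.sub_diag, !Nat.eqb_refl. simpl Nat.eqb.
      assert (Hb : binom (S j) j = S j).
      { rewrite <- (binom_1 (S j)) at 2. rewrite <- binom_sym by lia. f_equal. lia. }
      rewrite Hb. field. exact HSj.
    + rewrite (proj2 (Nat.eqb_neq (j - d) 0)), (proj2 (Nat.eqb_neq d j)) by lia. ring.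
Qed.

Lemma faulhaber_sub_one j x : faulhaber j x - faulhaber j (x - 1) = x ^ j.
Proof.
  unfold faulhaber. rewrite <- fsum_minus.
  transitivity (- fsum 0 j (fun l => fsum 0 l (fun d =>
                  faulhaber_coef j l * sub_one_coef l d * x ^ d))).
  - rewrite <- fsum_opp. apply fsum_ext. intros l _.
    rewrite <- Rmult_minus_distr_l, pow_sub_pow_sub_one, <- Ropp_mult_distr_r, <- fsum_scal_l.
    f_equal. apply fsum_ext; intros; ring.
  - rewrite fsum_triangle.
    transitivity (- fsum 0 j (fun d => x ^ d * if (d =? j)%nat then -1 else 0)).
    + f_equal. apply fsum_ext. intros d Hd.
      rewrite <- faulhaber_coef_sum, <- fsum_scal_l by lia. apply fsum_ext; intros; ring.
    + rewrite (fsum_single 0 j j), Nat.eqb_refl; [ring | lia |].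
      intros i _ Hij. rewrite (proj2 (Nat.eqb_neq i j)) by exact Hij. ring.
Qed.

(** * Hyperharmonic numbers as combinations of harmonic numbers *)

Lemma Hq_0 q : Hq 0 q = 0.
Proof. apply fsum_nil. lia. Qed.

Lemma Hq_S n q : Hq (S n) q = Hq n q + powerRZ (INR (S n)) (- q).
Proof. apply fsum_last. lia. Qed.

Lemma sum_pow_mul_Hq_by_parts j q n :
  fsum 1 n (fun k => INR k ^ j * Hq k q) =
  faulhaber j (INR n) * Hq n q
  - fsum 1 n (fun k => faulhaber j (INR k - 1) * powerRZ (INR k) (- q)).
Proof.
  induction n as [|n IHn].
  - rewrite !fsum_nil, Hq_0 by lia. ring.
  - rewrite !fsum_last, IHn, Hq_S by lia.
    pose proof (faulhaber_sub_one j (INR (S n))) as Hdiff.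
    rewrite S_INR in Hdiff |- *. replace (INR n + 1 - 1) with (INR n) in * by ring.
    replace (faulhaber j (INR n + 1)) with (faulhaber j (INR n) + (INR n + 1) ^ j) by lra.
    ring.
Qed.

Lemma pow_mul_powerRZ_INR k d q : (1 <= k)%nat ->
  INR k ^ d * powerRZ (INR k) (- q) = powerRZ (INR k) (- (q - Z.of_nat d)).
Proof.
  intros Hk. rewrite pow_powerRZ, <- powerRZ_add by (apply not_0_INR; lia).
  f_equal. lia.
Qed.

Lemma sum_pow_mul_Hq j q n :
  fsum 1 n (fun k => INR k ^ j * Hq k q) =
  faulhaber j (INR n) * Hq n q
  - fsum 0 j (fun l => faulhaber_coef j l *
      fsum 0 (S l) (fun d => sub_one_coef l d * Hq n (q - Z.of_nat d))).
Proof.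
  rewrite sum_pow_mul_Hq_by_parts. f_equal.
  transitivity (fsum 1 n (fun k => fsum 0 j (fun l => faulhaber_coef j l *
    fsum 0 (S l) (fun d => sub_one_coef l d * powerRZ (INR k) (- (q - Z.of_nat d)))))).
  - apply fsum_ext. intros k Hk. unfold faulhaber. rewrite <- fsum_scal_r.
    apply fsum_ext. intros l _.
    rewrite pow_sub_one_expand, Rmult_assoc, <- fsum_scal_r. f_equal.
    apply fsum_ext. intros d _. rewrite <- pow_mul_powerRZ_INR by lia. ring.
  - rewrite fsum_swap. apply fsum_ext. intros l _. rewrite fsum_scal_l. f_equal.
    rewrite fsum_swap. apply fsum_ext. intros d _. rewrite fsum_scal_l. reflexivity.
Qed.

Ltac decide_nat_tests :=
  repeat match goal with
  | |- context [Nat.leb ?a ?b] =>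
      first [rewrite (proj2 (Nat.leb_le a b)) by lia | rewrite (proj2 (Nat.leb_gt a b)) by lia]
  | |- context [Nat.eqb ?a ?b] =>
      first [rewrite (proj2 (Nat.eqb_eq a b)) by lia | rewrite (proj2 (Nat.eqb_neq a b)) by lia]
  end; simpl andb; cbv iota.

Section HyperharmonicStep.

Variables (r : nat) (A : nat -> nat -> R).

(* The contribution of [A m j] to the coefficient of [H_n^(p - i)] in the next step, through
   [faulhaber_coef j l] and the coefficient of [x ^ (i - m)] in [(x - 1) ^ (l + 1)]. *)
Definition shift_term (m j l i : nat) : R :=
  if andb (m <=? i)%nat (i <=? m + S l)%nat
  then A m j * faulhaber_coef j l * sub_one_coef l (i - m) else 0.

Definition shift_coef (i : nat) : R :=
  fsum 0 r (fun m => fsum 0 (r - m) (fun j => fsum 0 j (fun l => shift_term m j l i))).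

Lemma a_step_pos m l : (m <= r)%nat -> (1 <= l <= S r - m)%nat ->
  a_step (S r) A m l = fsum (l - 1) (r - m) (fun j => A m j * faulhaber_coef j (l - 1)).
Proof.
  intros Hm Hl. unfold a_step. decide_nat_tests.
  replace (S r - 1 - m)%nat with (r - m)%nat by lia.
  apply fsum_ext. intros j Hj. unfold faulhaber_coef.
  replace (j - (l - 1))%nat with (S j - l)%nat by lia. unfold Rdiv. ring.
Qed.

Lemma regroup_powers x h :
  fsum 0 r (fun m => fsum 0 (r - m) (fun j => A m j * faulhaber j x * h m))
  = fsum 0 (S r) (fun m => fsum 1 (S r - m) (fun l => a_step (S r) A m l * x ^ l * h m)).
Proof.
  rewrite fsum_last, Nat.sub_diag, (fsum_nil 1 0), Rplus_0_r by lia.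
  apply fsum_ext. intros m Hm.
  replace (S r - m)%nat with (r - m + 1)%nat by lia.
  change 1%nat with (0 + 1)%nat at 1.
  rewrite <- (fsum_shift 0 (r - m) 1 (fun l => a_step (S r) A m l * x ^ l * h m)).
  transitivity (fsum 0 (r - m) (fun j => fsum 0 j (fun l => A m j * faulhaber_coef j l * x ^ S l * h m))).
  { apply fsum_ext. intros j Hj. unfold faulhaber.
    rewrite <- fsum_scal_l, <- fsum_scal_r. apply fsum_ext; intros; ring. }
  rewrite fsum_triangle. apply fsum_ext. intros l Hl.
  rewrite a_step_pos by lia. replace (l + 1 - 1)%nat with l by lia.
  rewrite <- !fsum_scal_r. apply fsum_ext. intros j Hj. rewrite Nat.add_1_r. ring.
Qed.

Lemma shift_term_sum h m j l : (m + S l <= S r)%nat ->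
  A m j * (faulhaber_coef j l * fsum 0 (S l) (fun d => sub_one_coef l d * h (m + d)%nat)) =
  fsum 0 (S r) (fun i => h i * shift_term m j l i).
Proof.
  intros Hml. rewrite (fsum_extend m (m + S l) 0 (S r)); try lia.
  2: { intros i Hi Hout. unfold shift_term. destruct Hout; decide_nat_tests; ring. }
  transitivity (fsum (0 + m) (S l + m) (fun i => h i * shift_term m j l i));
    [|f_equal; lia].
  rewrite <- fsum_shift, <- !fsum_scal_l. apply fsum_ext. intros d Hd.
  unfold shift_term. decide_nat_tests.
  rewrite Nat.add_sub, Nat.add_comm. ring.
Qed.

Lemma regroup_shifts h :
  fsum 0 r (fun m => fsum 0 (r - m) (fun j => A m j * fsum 0 j (fun l =>
    faulhaber_coef j l * fsum 0 (S l) (fun d => sub_one_coef l d * h (m + d)%nat))))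
  = fsum 0 (S r) (fun i => h i * shift_coef i).
Proof.
  transitivity (fsum 0 r (fun m => fsum 0 (r - m) (fun j => fsum 0 j (fun l =>
                  fsum 0 (S r) (fun i => h i * shift_term m j l i))))).
  { apply fsum_ext. intros m Hm. apply fsum_ext. intros j Hj.
    rewrite <- fsum_scal_l. apply fsum_ext. intros l Hl. apply shift_term_sum. lia. }
  transitivity (fsum 0 r (fun m => fsum 0 (S r) (fun i => fsum 0 (r - m) (fun j =>
                  fsum 0 j (fun l => h i * shift_term m j l i))))).
  { apply fsum_ext. intros m Hm. rewrite <- fsum_swap.
    apply fsum_ext. intros j Hj. apply fsum_swap. }
  rewrite fsum_swap. apply fsum_ext. intros i Hi. unfold shift_coef.
  rewrite <- fsum_scal_l. apply fsum_ext. intros m Hm.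
  rewrite <- fsum_scal_l. apply fsum_ext. intros j Hj.
  rewrite <- fsum_scal_l. reflexivity.
Qed.

Lemma shift_coef_low i : (i <= r)%nat -> shift_coef i = - a_step (S r) A i 0.
Proof.
  intros Hi. unfold a_step, shift_coef. decide_nat_tests.
  rewrite Ropp_involutive. replace (S r - 1)%nat with r by lia.
  rewrite (fsum_extend 0 i 0 r); try lia.
  2: { intros m Hm [Hout|Hout]; [lia|].
       apply fsum_zero. intros j Hj. apply fsum_zero. intros l Hl.
       unfold shift_term. decide_nat_tests. reflexivity. }
  apply fsum_ext. intros y Hy. replace (S r - 1 - y)%nat with (r - y)%nat by lia.
  rewrite (fsum_extend (i - y - 1) (r - y) 0 (r - y)); try lia.
  2: { intros j Hj [Hout|Hout]; [|lia].
       apply fsum_zero. intros l Hl. unfold shift_term. decide_nat_tests. reflexivity. }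
  apply fsum_ext. intros j Hj. unfold D_coef.
  rewrite (fsum_extend (i - y - 1) j 0 j); try lia.
  2: { intros l Hl [Hout|Hout]; [|lia]. unfold shift_term. decide_nat_tests. reflexivity. }
  rewrite <- fsum_scal_l. apply fsum_ext. intros l Hl.
  unfold shift_term, sub_one_coef, faulhaber_coef. decide_nat_tests.
  replace (S l - (i - y))%nat with (S l + y - i)%nat by lia. ring.
Qed.

Lemma shift_coef_top : shift_coef (S r) = - a_step (S r) A (S r) 0.
Proof.
  unfold a_step, shift_coef. decide_nat_tests.
  rewrite Ropp_involutive. replace (S r - 1)%nat with r by lia.
  apply fsum_ext. intros m Hm.
  rewrite (fsum_single 0 (r - m) (r - m)); try lia.
  2: { intros j Hj Hne. apply fsum_zero. intros l Hl.
       unfold shift_term. decide_nat_tests. reflexivity. }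
  rewrite (fsum_single 0 (r - m) (r - m)); try lia.
  2: { intros l Hl Hne. unfold shift_term. decide_nat_tests. reflexivity. }
  unfold shift_term, sub_one_coef, faulhaber_coef. decide_nat_tests.
  replace (S r - m)%nat with (S (r - m)) by lia.
  rewrite !Nat.sub_diag, binom_0, binom_diag. replace (S (r - m) - 1)%nat with (r - m)%nat by lia.
  change (Bplus 0) with 1. change (INR 1) with 1. field. apply not_0_INR. lia.
Qed.

Lemma a_step_regroup x h :
  fsum 0 r (fun m => fsum 0 (r - m) (fun j => A m j *
     (faulhaber j x * h m - fsum 0 j (fun l =>
        faulhaber_coef j l * fsum 0 (S l) (fun d => sub_one_coef l d * h (m + d)%nat)))))
  = fsum 0 (S r) (fun m => fsum 0 (S r - m) (fun l => a_step (S r) A m l * x ^ l * h m)).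
Proof.
  transitivity (
    fsum 0 r (fun m => fsum 0 (r - m) (fun j => A m j * faulhaber j x * h m))
    - fsum 0 r (fun m => fsum 0 (r - m) (fun j => A m j * fsum 0 j (fun l =>
        faulhaber_coef j l * fsum 0 (S l) (fun d => sub_one_coef l d * h (m + d)%nat))))).
  { rewrite <- fsum_minus. apply fsum_ext. intros m Hm.
    rewrite <- fsum_minus. apply fsum_ext. intros; ring. }
  rewrite regroup_powers, regroup_shifts.
  transitivity (fsum 0 (S r) (fun m => a_step (S r) A m 0 * x ^ 0 * h m
    + fsum 1 (S r - m) (fun l => a_step (S r) A m l * x ^ l * h m))).
  2: { apply fsum_ext. intros m Hm. symmetry. apply fsum_first. lia. }
  rewrite fsum_plus. unfold Rminus. rewrite Rplus_comm, <- fsum_opp. f_equal.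
  apply fsum_ext. intros i Hi.
  destruct (Nat.eq_dec i (S r)) as [->|Hir].
  - rewrite shift_coef_top. simpl. ring.
  - rewrite shift_coef_low by lia. simpl. ring.
Qed.

End HyperharmonicStep.

Lemma hyperH_expansion r p n : hyperH p (S r) n =
  fsum 0 r (fun m => fsum 0 (r - m) (fun j =>
    a_coef (S r) m j * INR n ^ j * Hq n (p - Z.of_nat m))).
Proof.
  revert n. induction r as [|r IHr]; intros n.
  - rewrite !fsum_one. simpl. rewrite Z.sub_0_r. ring.
  - change (hyperH p (S (S r)) n) with (fsum 1 n (fun k => hyperH p (S r) k)).
    change (a_coef (S (S r))) with (a_step (S r) (a_coef (S r))).
    rewrite <- (a_step_regroup r (a_coef (S r)) (INR n) (fun i => Hq n (p - Z.of_nat i))).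
    erewrite (fsum_ext 1 n); [| intros k _; apply IHr].
    rewrite fsum_swap. apply fsum_ext. intros m Hm.
    rewrite fsum_swap. apply fsum_ext. intros j Hj.
    transitivity (a_coef (S r) m j * fsum 1 n (fun k => INR k ^ j * Hq k (p - Z.of_nat m))).
    { rewrite <- fsum_scal_l. apply fsum_ext. intros; ring. }
    rewrite sum_pow_mul_Hq. do 2 f_equal.
    apply fsum_ext. intros l Hl. f_equal. apply fsum_ext. intros d Hd.
    rewrite Nat2Z.inj_add, Z.sub_add_distr. reflexivity.
Qed.

(** * Partial fractions of the inverse binomial coefficient *)

(* [rising k x = x (x + 1) ... (x + k)], a product of [k + 1] factors *)
Fixpoint rising (k : nat) (x : R) : R :=
  match k with O => x | S k' => rising k' x * (x + INR (S k')) end.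

Lemma rising_pos k x : 0 < x -> 0 < rising k x.
Proof.
  intros Hx. induction k as [|k IHk]; cbn [rising]; [exact Hx|].
  pose proof (pos_INR (S k)). apply Rmult_lt_0_compat; lra.
Qed.

Lemma rising_shift k x : rising k (x + 1) * x = rising (S k) x.
Proof.
  induction k as [|k IHk]; [simpl; ring|].
  change (rising (S k) (x + 1) * x = rising (S k) x * (x + INR (S (S k)))).
  cbn [rising] in *. rewrite <- IHk, !S_INR. ring.
Qed.

Lemma rising_INR_fact k n : rising k (INR (S n)) * INR (fact n) = INR (fact (S n + k)).
Proof.
  induction k as [|k IHk].
  - rewrite Nat.add_0_r, fact_simpl, mult_INR. reflexivity.
  - cbn [rising]. replace (S n + S k)%nat with (S (S n + k)) by lia.
    rewrite fact_simpl, mult_INR, <- IHk, (S_INR (S n + k)), plus_INR, !S_INR. ring.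
Qed.

Definition alt_binom_frac (k : nat) (x : R) : R :=
  fsum 0 k (fun r => (-1) ^ r * INR (binom k r) / (x + INR r)).

Lemma alt_binom_frac_S k x : 0 < x ->
  alt_binom_frac (S k) x = alt_binom_frac k x - alt_binom_frac k (x + 1).
Proof.
  intros Hx. unfold alt_binom_frac.
  set (g r := (-1) ^ r * INR (match r with O => 0%nat | S r' => binom k r' end) / (x + INR r)).
  transitivity (fsum 0 (S k) (fun r => (-1) ^ r * INR (binom k r) / (x + INR r))
                + fsum 0 (S k) g).
  { rewrite <- fsum_plus. apply fsum_ext. intros [|r] _; unfold g.
    - rewrite !binom_0. simpl. field. lra.
    - simpl binom at 1. rewrite plus_INR. field. pose proof (pos_INR (S r)). lra. }
  rewrite fsum_last, binom_gt, (fsum_first 0 (S k) g) by lia.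
  pose proof (fsum_shift 0 k 1 g) as Hshift. rewrite !Nat.add_1_r in Hshift.
  rewrite <- Hshift. unfold Rminus. rewrite <- fsum_opp.
  replace ((-1) ^ S k * INR 0 / (x + INR (S k))) with 0 by (simpl; unfold Rdiv; ring).
  replace (g 0%nat) with 0 by (unfold g; simpl; unfold Rdiv; ring).
  rewrite Rplus_0_r, Rplus_0_l. f_equal. apply fsum_ext. intros i _. unfold g.
  rewrite Nat.add_1_r, S_INR. simpl pow. field. pose proof (pos_INR i). lra.
Qed.

Lemma alt_binom_frac_closed k x : 0 < x -> alt_binom_frac k x = INR (fact k) / rising k x.
Proof.
  revert x. induction k as [|k IHk]; intros x Hx.
  - unfold alt_binom_frac. rewrite fsum_one. simpl. field. lra.
  - rewrite alt_binom_frac_S, !IHk by lra.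
    pose proof (rising_pos k x Hx). pose proof (pos_INR k).
    assert (Hshift : rising k (x + 1) = rising k x * (x + INR (S k)) / x).
    { pose proof (rising_shift k x) as Hs. cbn [rising] in Hs. rewrite <- Hs. field. lra. }
    rewrite Hshift, fact_simpl, mult_INR, S_INR. cbn [rising]. rewrite S_INR.
    field. repeat split; lra.
Qed.

Lemma inv_binom_partial_fractions n k : (1 <= n)%nat -> (1 <= k)%nat ->
  / INR (binom (n + k) k) =
  fsum 1 k (fun r => (-1) ^ (r + 1) * INR r * INR (binom k r) / INR (n + r)).
Proof.
  intros Hn Hk. destruct n as [|n]; [lia|].
  set (x := INR (S n)). assert (Hx : 0 < x) by (apply lt_0_INR; lia).
  transitivity (x * alt_binom_frac k x).
  - rewrite alt_binom_frac_closed, INR_binom by (lia || lra). unfold Binomial.C.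
    replace (S n + k - k)%nat with (S n) by lia. rewrite <- rising_INR_fact.
    pose proof (rising_pos k x Hx). pose proof (INR_fact_lt_0 n). pose proof (INR_fact_lt_0 k).
    unfold x. rewrite fact_simpl, mult_INR. fold x. field. repeat split; lra.
  - (* [x / (x + r) = 1 - r / (x + r)], and the constant parts cancel by [alt_binom_sum] *)
    unfold alt_binom_frac. rewrite <- fsum_scal_l.
    transitivity (fsum 0 k (fun r => - ((-1) ^ r * INR (binom k r))
                                     + x * ((-1) ^ r * INR (binom k r) / (x + INR r)))).
    { rewrite fsum_plus, fsum_opp, alt_binom_sum by lia. ring. }
    rewrite (fsum_first 0 k) by lia.
    replace (- ((-1) ^ 0 * INR (binom k 0)) + x * ((-1) ^ 0 * INR (binom k 0) / (x + INR 0)))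
      with 0 by (rewrite binom_0; simpl; field; lra).
    rewrite Rplus_0_l. apply fsum_ext. intros r Hr. rewrite plus_INR, pow_add. fold x.
    pose proof (pos_INR r). field. lra.
Qed.

(** * Convergence of the series [T] *)

Lemma Hq_nonneg n q : 0 <= Hq n q.
Proof.
  rewrite <- (fsum_zero 1 n (fun _ => 0)) by reflexivity.
  apply fsum_le. intros i Hi. apply powerRZ_le, lt_0_INR. lia.
Qed.

Lemma powerRZ_le_pow x z l : 1 <= x -> (z <= Z.of_nat l)%Z -> powerRZ x z <= x ^ l.
Proof.
  intros Hx Hz. rewrite pow_powerRZ.
  replace (Z.of_nat l) with (z + Z.of_nat (Z.to_nat (Z.of_nat l - z)))%Z by lia.
  rewrite powerRZ_add, <- pow_powerRZ by lra.
  pose proof (powerRZ_lt x z ltac:(lra)).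
  pose proof (pow_R1_Rle x (Z.to_nat (Z.of_nat l - z)) Hx). nra.
Qed.

Lemma Hq_le_pow_mul_H1 n q l : (1 - Z.of_nat l <= q)%Z -> Hq n q <= INR n ^ l * Hq n 1.
Proof.
  intros Hq'. unfold Hq. rewrite <- fsum_scal_l. apply fsum_le. intros j Hj.
  assert (Hj1 : 1 <= INR j) by (apply (le_INR 1); lia).
  replace (- q)%Z with (-1 + (1 - q))%Z by lia. rewrite powerRZ_add by lra.
  rewrite (Rmult_comm (INR n ^ l)). apply Rmult_le_compat_l; [apply powerRZ_le; lra|].
  apply Rle_trans with (INR j ^ l); [apply powerRZ_le_pow; lia || lra|].
  apply pow_incr. split; [lra | apply le_INR; lia].
Qed.

Lemma Hq_1_S n : Hq (S n) 1 = Hq n 1 + / INR (S n).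
Proof. rewrite Hq_S. f_equal. simpl. rewrite Rmult_1_r. reflexivity. Qed.

Lemma T_term_bound q1 q2 u r n l1 l2 : (1 <= n)%nat -> (1 <= r)%nat -> (l1 + l2 + 1 <= u)%nat ->
  (1 - Z.of_nat l1 <= q1)%Z -> (1 - Z.of_nat l2 <= q2)%Z ->
  0 <= T_term q1 q2 u r n <= Hq n 1 ^ 2 / (INR n * (INR n + 1)).
Proof.
  intros Hn Hr Hu H1 H2. unfold T_term.
  assert (Hx : 1 <= INR n) by (apply (le_INR 1); lia).
  assert (Hnr : INR n + 1 <= INR (n + r))
    by (rewrite plus_INR; apply Rplus_le_compat_l, (le_INR 1); lia).
  pose proof (Hq_nonneg n q1). pose proof (Hq_nonneg n q2). pose proof (Hq_nonneg n 1).
  pose proof (Hq_le_pow_mul_H1 n q1 l1 H1). pose proof (Hq_le_pow_mul_H1 n q2 l2 H2).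
  assert (Hp1 : 0 < INR n ^ l1) by (apply pow_lt; lra).
  assert (Hp2 : 0 < INR n ^ l2) by (apply pow_lt; lra).
  set (e := (u - l1 - l2)%nat).
  assert (He : INR n ^ u = INR n ^ l1 * INR n ^ l2 * INR n ^ e)
    by (rewrite <- !pow_add; f_equal; unfold e; lia).
  assert (Hpe : INR n <= INR n ^ e).
  { replace e with (S (e - 1)) by (unfold e; lia). simpl.
    pose proof (pow_R1_Rle (INR n) (e - 1) Hx). nra. }
  rewrite He. unfold Rdiv. split.
  - apply Rmult_le_pos; [nra|]. apply Rlt_le, Rinv_0_lt_compat.
    repeat apply Rmult_lt_0_compat; lra.
  - apply Rle_trans with (INR n ^ l1 * Hq n 1 * (INR n ^ l2 * Hq n 1)
                          * / (INR n ^ l1 * INR n ^ l2 * INR n ^ e * INR (n + r))).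
    + apply Rmult_le_compat_r; [|apply Rmult_le_compat; assumption].
      apply Rlt_le, Rinv_0_lt_compat. repeat apply Rmult_lt_0_compat; lra.
    + replace (INR n ^ l1 * Hq n 1 * (INR n ^ l2 * Hq n 1)
               * / (INR n ^ l1 * INR n ^ l2 * INR n ^ e * INR (n + r)))
        with (Hq n 1 ^ 2 * / (INR n ^ e * INR (n + r))) by (field; repeat split; lra).
      apply Rmult_le_compat_l; [nra|]. apply Rinv_le_contravar; [nra|].
      apply Rmult_le_compat; lra.
Qed.

Definition harmonic_potential (n : nat) : R := (Hq n 1 ^ 2 + 2 * Hq n 1 + 3) / INR n.

Lemma harmonic_potential_nonneg n : (1 <= n)%nat -> 0 <= harmonic_potential n.
Proof.
  intros Hn. unfold harmonic_potential. pose proof (Hq_nonneg n 1).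
  assert (1 <= INR n) by (apply (le_INR 1); lia).
  apply Rlt_le, Rdiv_lt_0_compat; nra.
Qed.

Lemma harmonic_sq_le_potential_decrease n : (1 <= n)%nat ->
  Hq n 1 ^ 2 / (INR n * (INR n + 1)) <= harmonic_potential n - harmonic_potential (S n).
Proof.
  intros Hn. unfold harmonic_potential. rewrite Hq_1_S, S_INR.
  assert (Hx : 1 <= INR n) by (apply (le_INR 1); lia). pose proof (Hq_nonneg n 1) as Hh.
  set (h := Hq n 1) in *. set (x := INR n) in *. clearbody h x.
  assert (Hy : 0 < / (x + 1)) by (apply Rinv_0_lt_compat; lra).
  assert (Hgap : (h ^ 2 + 2 * h + 3) / x
                 - ((h + / (x + 1)) ^ 2 + 2 * (h + / (x + 1)) + 3) / (x + 1)
                 - h ^ 2 / (x * (x + 1))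
                 = (2 * h * / (x + 1) + 1 + / (x + 1) + / (x + 1) * / (x + 1)) / (x * (x + 1)))
    by (field; split; lra).
  assert (0 < (2 * h * / (x + 1) + 1 + / (x + 1) + / (x + 1) * / (x + 1)) / (x * (x + 1)))
    by (apply Rdiv_lt_0_compat; nra).
  lra.
Qed.

Lemma ex_series_harmonic_sq :
  ex_series (fun n => Hq (S n) 1 ^ 2 / (INR (S n) * (INR (S n) + 1))).
Proof.
  set (a n := Hq (S n) 1 ^ 2 / (INR (S n) * (INR (S n) + 1))).
  assert (Ha : forall n, 0 <= a n).
  { intros n. unfold a. pose proof (pos_INR (S n)).
    apply Rmult_le_pos; [apply pow2_ge_0|]. apply Rlt_le, Rinv_0_lt_compat.
    assert (0 < INR (S n)) by (apply lt_0_INR; lia). nra. }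
  assert (Hpartial : forall N, sum_f_R0 a N <= harmonic_potential 1 - harmonic_potential (S (S N))).
  { induction N as [|N IHN]; simpl sum_f_R0.
    - apply harmonic_sq_le_potential_decrease. lia.
    - pose proof (harmonic_sq_le_potential_decrease (S (S N)) ltac:(lia)). unfold a at 2. lra. }
  destruct (growing_cv (sum_f_R0 a)) as [l Hl].
  - intros n. simpl. pose proof (Ha (S n)). lra.
  - exists (harmonic_potential 1). intros y [N ->].
    pose proof (Hpartial N). pose proof (harmonic_potential_nonneg (S (S N)) ltac:(lia)). lra.
  - exists l. apply is_series_Reals. exact Hl.
Qed.

Lemma ex_series_T_term q1 q2 u r l1 l2 : (1 <= r)%nat -> (l1 + l2 + 1 <= u)%nat ->
  (1 - Z.of_nat l1 <= q1)%Z -> (1 - Z.of_nat l2 <= q2)%Z ->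
  ex_series (fun n => T_term q1 q2 u r (S n)).
Proof.
  intros Hr Hu H1 H2.
  eapply (@ex_series_le R_AbsRing R_CompleteNormedModule); [|exact ex_series_harmonic_sq].
  intros n. destruct (T_term_bound q1 q2 u r (S n) l1 l2) as [Hlo Hhi]; try lia.
  change (norm (T_term q1 q2 u r (S n))) with (Rabs (T_term q1 q2 u r (S n))).
  rewrite Rabs_pos_eq; assumption.
Qed.

Lemma is_series_zero : is_series (fun _ : nat => 0) 0.
Proof.
  apply is_series_Reals. intros eps Heps. exists 0%nat. intros n _.
  replace (sum_f_R0 (fun _ => 0) n) with 0.
  - unfold Rdist. rewrite Rminus_0_r, Rabs_R0. exact Heps.
  - induction n as [|n IHn]; simpl; [reflexivity|]. rewrite <- IHn. ring.
Qed.

Lemma is_series_fsum a b (F : nat -> nat -> R) (L : nat -> R) :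
  (forall i, (a <= i <= b)%nat -> is_series (F i) (L i)) ->
  is_series (fun n => fsum a b (fun i => F i n)) (fsum a b L).
Proof.
  intros HF. rewrite fsum_sum_seq.
  apply (is_series_ext (fun k => sum_seq a (S b - a) (fun i => F i k))); [reflexivity|].
  assert (HF' : forall i, (a <= i < a + (S b - a))%nat -> is_series (F i) (L i))
    by (intros i Hi; apply HF; lia).
  clear HF. induction (S b - a)%nat as [|n IHn].
  - exact is_series_zero.
  - rewrite sum_seq_S.
    apply (is_series_ext (fun k => sum_seq a n (fun i => F i k) + F (a + n)%nat k));
      [intros k; rewrite sum_seq_S; reflexivity|].
    apply (is_series_plus (fun k => sum_seq a n (fun i => F i k)) (F (a + n)%nat)).
    + apply IHn. intros i Hi. apply HF'. lia.
    + apply HF'. lia.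
Qed.

Lemma summand_expansion s1 s2 p1 p2 m k n :
  (1 <= s1)%nat -> (1 <= s2)%nat -> (1 <= k)%nat -> (s1 + s2 - 1 <= m)%nat ->
  hyperH p1 s1 (S n) * hyperH p2 s2 (S n) / (INR (S n) ^ m * INR (binom (S n + k) k)) =
  fsum 0 (s1 - 1) (fun l1 => fsum 0 (s1 - 1 - l1) (fun t1 =>
  fsum 0 (s2 - 1) (fun l2 => fsum 0 (s2 - 1 - l2) (fun t2 =>
    a_coef s1 l1 t1 * a_coef s2 l2 t2 *
    fsum 1 k (fun r => (-1) ^ (r + 1) * INR r * INR (binom k r) *
      T_term (p1 - Z.of_nat l1) (p2 - Z.of_nat l2) (m - t1 - t2) r (S n)))))).
Proof.
  intros Hs1 Hs2 Hk Hm.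
  destruct s1 as [|r1]; [lia|]. destruct s2 as [|r2]; [lia|].
  replace (S r1 - 1)%nat with r1 by lia. replace (S r2 - 1)%nat with r2 by lia.
  set (x := INR (S n)). assert (Hx : 0 < x) by (apply lt_0_INR; lia).
  assert (HB : 0 < INR (binom (S n + k) k)) by (apply binom_pos; lia).
  unfold Rdiv. rewrite !hyperH_expansion. fold x.
  rewrite Rmult_assoc, <- fsum_scal_r. apply fsum_ext. intros l1 Hl1.
  rewrite <- fsum_scal_r. apply fsum_ext. intros t1 Ht1.
  rewrite <- fsum_scal_r, <- fsum_scal_l. apply fsum_ext. intros l2 Hl2.
  rewrite <- fsum_scal_r, <- fsum_scal_l. apply fsum_ext. intros t2 Ht2.
  set (H1 := Hq (S n) (p1 - Z.of_nat l1)). set (H2 := Hq (S n) (p2 - Z.of_nat l2)).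
  set (u := (m - t1 - t2)%nat).
  assert (Hxm : x ^ m = x ^ t1 * x ^ t2 * x ^ u)
    by (rewrite <- !pow_add; f_equal; unfold u; lia).
  assert (0 < x ^ u) by (apply pow_lt; lra).
  assert (0 < x ^ t1) by (apply pow_lt; lra).
  assert (0 < x ^ t2) by (apply pow_lt; lra).
  transitivity (a_coef (S r1) l1 t1 * a_coef (S r2) l2 t2 * (H1 * H2 / x ^ u) *
     fsum 1 k (fun r => (-1) ^ (r + 1) * INR r * INR (binom k r) / INR (S n + r))).
  - rewrite <- inv_binom_partial_fractions, Hxm by lia. field. repeat split; lra.
  - rewrite Rmult_assoc, <- fsum_scal_l. f_equal. apply fsum_ext. intros r Hr.
    unfold T_term. fold x H1 H2 u.
    assert (0 < INR (S n + r)) by (apply lt_0_INR; lia).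
    field. repeat split; lra.
Qed.

Theorem theorem3 (s1 s2 p1 p2 m k : nat)
  (hs1 : (1 <= s1)%nat) (hs2 : (1 <= s2)%nat)
  (hp1 : (1 <= p1)%nat) (hp2 : (1 <= p2)%nat)
  (hm : (1 <= m)%nat) (hk : (1 <= k)%nat)
  (hmge : (s1 + s2 - 1 <= m)%nat) :
  (forall l1 t1 l2 t2 r : nat,
     (l1 <= s1 - 1)%nat -> (t1 <= s1 - 1 - l1)%nat ->
     (l2 <= s2 - 1)%nat -> (t2 <= s2 - 1 - l2)%nat ->
     (1 <= r <= k)%nat ->
     ex_series (fun n => T_term (Z.of_nat p1 - Z.of_nat l1) (Z.of_nat p2 - Z.of_nat l2)
                                (m - t1 - t2) r (S n)))
  /\
  is_series
    (fun n => hyperH (Z.of_nat p1) s1 (S n) * hyperH (Z.of_nat p2) s2 (S n)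
              / (INR (S n) ^ m * INR (binom (S n + k) k)))
    (fsum 0 (s1 - 1) (fun l1 => fsum 0 (s1 - 1 - l1) (fun t1 =>
     fsum 0 (s2 - 1) (fun l2 => fsum 0 (s2 - 1 - l2) (fun t2 =>
       a_coef s1 l1 t1 * a_coef s2 l2 t2 *
       fsum 1 k (fun r =>
         (-1) ^ (r + 1) * INR r * INR (binom k r)
         * T (Z.of_nat p1 - Z.of_nat l1) (Z.of_nat p2 - Z.of_nat l2) (m - t1 - t2) r)))))).
Proof.
  split.
  { intros l1 t1 l2 t2 r Hl1 Ht1 Hl2 Ht2 Hr.
    apply (ex_series_T_term _ _ _ _ l1 l2); lia. }
  eapply is_series_ext; [intros n; symmetry; apply summand_expansion; lia|].
  apply is_series_fsum. intros l1 Hl1. apply is_series_fsum. intros t1 Ht1.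
  apply is_series_fsum. intros l2 Hl2. apply is_series_fsum. intros t2 Ht2.
  apply (@is_series_scal R_AbsRing R_NormedModule).
  apply is_series_fsum. intros r Hr.
  apply (@is_series_scal R_AbsRing R_NormedModule).
  apply Series_correct, (ex_series_T_term _ _ _ _ l1 l2); lia.
Qed.
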